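(* Let $\mathcal{M}$ be the association scheme generated by the Möbius–Kantor graph $GP(8,3)$ (a rank-$6$ scheme), with distinguished relation $R_1$ the edge relation of $GP(8,3)$. Then every association scheme with a distinguished relation having the same relation-distribution diagram as $(\mathcal{M},R_1)$ is isomorphic to $\mathcal{M}$ (with the distinguished relation corresponding to $R_1$).
   Context: A (symmetric) association scheme with rank $d+1$ on a finite set $X$ is a partition $\mathcal{R}=\{R_0,\dots,R_d\}$ of $X\times X$ with $R_0$ the diagonal, each $R_i$ symmetric, and numbers $p^h_{ij}$ such that for every $(x,y)\in R_h$ the number of $z$ with $(x,z)\in R_i$, $(z,y)\in R_j$ equals $p^h_{ij}$; $k_i=p^0_{ii}$. The association scheme generated by a graph is the association scheme of minimal rank having the graph's edge relation as a relation. Two schemes with distinguished relations $R_1$, $R'_1$ have the same relation-distribution diagram if they have the same rank and there is a bijection $\sigma$ of the index set with $\sigma(0)=0$, $\sigma(1)=1$, $k_i=k'_{\sigma(i)}$ and $p^i_{1j}=p'^{\sigma(i)}_{1\sigma(j)}$ for all $i,j$. The generalized Petersen graph $GP(n,s)$ has vertices $i$ and $i^*$ for $i\in\mathbb{Z}_n$, with $i$ adjacent to $i\pm1$ and $i^*$, and $i^*$ adjacent to $(i\pm s)^*$. *)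

From mathcomp Require Import all_boot.
Set Implicit Arguments. Unset Strict Implicit. Unset Printing Implicit Defensive.

(* A symmetric association scheme of rank n on a finite type T is given by
   its class function c : T -> T -> 'I_n ; (x,y) \in R_i  <->  c x y = i. *)
Definition is_scheme (T : finType) (n : nat) (c : T -> T -> 'I_n) : Prop :=
  [/\ (forall x y, (val (c x y) == 0) = (x == y)),
      (forall x y, c x y = c y x),
      (forall i : 'I_n, exists x y, c x y = i)
    & (forall h i j : 'I_n, exists p : nat, forall x y, c x y = h ->
         #|[set z | (c x z == i) && (c z y == j)]| = p)].

Definition pnum (T : finType) (n : nat) (c : T -> T -> 'I_n) (h i j : nat) : nat :=
  if [pick xy : T * T | val (c xy.1 xy.2) == h] is Some xy then
    #|[set z | (val (c xy.1 z) == i) && (val (c z xy.2) == j)]|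
  else 0.

Definition valency (T : finType) (n : nat) (c : T -> T -> 'I_n) (i : nat) : nat :=
  pnum c 0 i i.

Definition same_diagram (T T' : finType) (n n' : nat)
    (c : T -> T -> 'I_n) (c' : T' -> T' -> 'I_n') : Prop :=
  n = n' /\
  exists sigma : 'I_n -> 'I_n', [/\ bijective sigma,
    (forall i, val i = 0 -> val (sigma i) = 0),
    (forall i, val i = 1 -> val (sigma i) = 1),
    (forall i, valency c (val i) = valency c' (val (sigma i)))
  & (forall i j, pnum c (val i) 1 (val j) = pnum c' (val (sigma i)) 1 (val (sigma j)))].

Definition scheme_iso_dist (T T' : finType) (n n' : nat)
    (c : T -> T -> 'I_n) (c' : T' -> T' -> 'I_n') : Prop :=
  exists (f : T' -> T) (tau : 'I_n' -> 'I_n),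
    [/\ bijective f, bijective tau,
        (forall x y, c (f x) (f y) = tau (c' x y))
      & (forall i, (val (tau i) == 1) = (val i == 1))].

(* The scheme generated by a graph E: a scheme of minimal rank having E as a
   relation; here E is placed as the distinguished relation R_1. *)
Definition generated_by (T : finType) (E : rel T) (n : nat) (c : T -> T -> 'I_n) : Prop :=
  [/\ is_scheme c,
      (forall x y, (val (c x y) == 1) = E x y)
    & (forall n' (c' : T -> T -> 'I_n'), is_scheme c' ->
         (exists i : 'I_n', forall x y, (c' x y == i) = E x y) -> n <= n')].

(* Generalized Petersen graph GP(m,s): vertex (false,i) = i, (true,i) = i^*. *)
Definition gp_adj (m s : nat) : rel (bool * 'I_m) :=
  fun u v =>
    match u, v with
    | (false, i), (false, j) => (val j == (val i + 1) %% m) || (val i == (val j + 1) %% m)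
    | (false, i), (true, j) => i == j
    | (true, i), (false, j) => i == j
    | (true, i), (true, j) => (val j == (val i + s) %% m) || (val i == (val j + s) %% m)
    end.
Arguments gp_adj m s : clear implicits.

From mathcomp Require Import all_boot.
Set Implicit Arguments. Unset Strict Implicit. Unset Printing Implicit Defensive.

(* Every relation of the scheme generated by GP(8,3) is singled out by counting
   data of the graph (equality, adjacency, common neighbours, neighbours at
   distance two); such data is constant on the relations of any scheme having the
   edges as a relation.  So the generated scheme is, up to relabelling, the
   explicit rank-6 scheme [mk_class], and a scheme with the same diagram becomes,
   after relabelling, a map [K] with the valencies and the numbers p^h_{1j} of
   [mk_class].
   These numbers determine the graph [K] around a vertex x: the three neighbours
   of x, the two vertices of relation 3, the six vertices of relation 2 (one for
   each neighbour P and each relation-3 vertex Q, as their unique common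
   neighbour), three vertices of relation 4, each adjacent to two of those six,
   and the antipode.  The pairing of the six by the relation-4 vertices is a
   3-cycle on the neighbours of x, which yields an isomorphism from GP(8,3); the
   counting data, transported along it, identifies [K] with [mk_class]. *)

Lemma card_count (T : finType) (s : seq T) (P : pred T) :
  uniq s -> (forall x, x \in s) -> #|P| = count P s.
Proof.
move=> s_uniq s_all; rewrite -size_filter -(card_uniqP (filter_uniq P s_uniq)).
by apply: eq_card => x; rewrite mem_filter s_all andbT.
Qed.

Lemma card_count_enum (T : finType) (P : pred T) : #|P| = count P (enum T).
Proof. by apply: card_count; [exact: enum_uniq | exact: mem_enum]. Qed.

Lemma card_preim_bij (T1 T2 : finType) (g : T1 -> T2) (P : pred T2) :
  bijective g -> #|[pred y | P (g y)]| = #|P|.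
Proof.
move=> [h gK hK]; rewrite -(card_image (can_inj gK)); apply: eq_card => v.
apply/imageP/idP => [[y Py ->] // | Pv]; by exists (h v); rewrite ?inE hK.
Qed.

Lemma surj_card_bij (T T' : finType) (f : T -> T') :
  (forall y, exists x, f x = y) -> #|T| <= #|T'| -> bijective f.
Proof.
move=> f_surj card_le; have codomT : #|codom f| = #|T'|.
  by apply: eq_card => y; have [x <-] := f_surj y; rewrite codom_f.
have /image_injP f_inj : #|codom f| == #|T| by rewrite eqn_leq leq_image_card codomT.
apply: inj_card_bij => [x y|]; first exact: f_inj.
by rewrite -codomT leq_image_card.
Qed.

Lemma eq_val_ord m (a b : 'I_m) t : val b = t -> (val a == t) = (a == b).
Proof. by move=> <-; rewrite val_eqE. Qed.

Lemma inv_fixes_val n (sigma sigma' : 'I_n -> 'I_n) t :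
  cancel sigma sigma' -> cancel sigma' sigma -> (forall i, val i = t -> val (sigma i) = t) ->
  forall i, (val (sigma' i) == t) = (val i == t).
Proof.
move=> sigmaK sigma'K sigma_t i; apply/eqP/eqP => e; first by rewrite -[i]sigma'K sigma_t.
have sigma_i : sigma i = i by apply: val_inj; rewrite sigma_t.
by rewrite -{1}sigma_i sigmaK.
Qed.

(* [inord] is not computable by [vm_compute]; this enumeration of ['I_n.+1] is. *)
Definition ords (n : nat) : seq 'I_n.+1 :=
  [seq Ordinal (ltn_pmod i (ltn0Sn n)) | i <- iota 0 n.+1].

Lemma mem_ords n (i : 'I_n.+1) : i \in ords n.
Proof.
apply/mapP; exists (val i); first by rewrite mem_iota ltn_ord.
by apply: val_inj; rewrite /= modn_small.
Qed.

Lemma ords_forallP n (P : pred 'I_n.+1) : reflect (forall i, P i) (all P (ords n)).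
Proof. by apply: (iffP allP) => [Pall i | Pall i _]; apply: Pall; rewrite ?mem_ords. Qed.

Section GraphClass.
Variables (T : eqType) (s : seq T) (E : rel T).

Definition common_nbrs u v := count (fun w => E u w && E w v) s.
Definition at_distance2 u w := [&& u != w, ~~ E u w & 0 < common_nbrs u w].
Definition distance2_nbrs u v := count (fun w => E v w && at_distance2 u w) s.

(* Separates the six relations of the Möbius–Kantor scheme; being defined by
   counting, it is constant on the relations of any scheme containing [E]. *)
Definition graph_class_in u v : nat :=
  if u == v then 0 else if E u v then 1 else if 0 < common_nbrs u v then 2
  else if distance2_nbrs u v == 3 then 3 else if distance2_nbrs u v == 0 then 5 else 4.

End GraphClass.

Definition graph_class (T : finType) (E : rel T) := graph_class_in (enum T) E.

Lemma graph_class_perm (T : eqType) (s1 s2 : seq T) (E : rel T) :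
  perm_eq s1 s2 -> graph_class_in s1 E =2 graph_class_in s2 E.
Proof.
move=> /permP s12 u v.
have cnE : common_nbrs s1 E =2 common_nbrs s2 E by move=> ? ?; apply: s12.
have d2E : distance2_nbrs s1 E u v = distance2_nbrs s2 E u v.
  by rewrite /distance2_nbrs s12; apply: eq_count => w; rewrite /at_distance2 cnE.
by rewrite /graph_class_in cnE d2E.
Qed.

Lemma graph_class_bij (T1 T2 : finType) (E1 : rel T1) (E2 : rel T2) (g : T1 -> T2) :
  bijective g -> (forall y w, E2 (g y) (g w) = E1 y w) ->
  forall y w, graph_class E2 (g y) (g w) = graph_class E1 y w.
Proof.
move=> g_bij gE; have g_inj := bij_inj g_bij.
have count_g (P : pred T2) : count P (enum T2) = count (P \o g) (enum T1).
  by rewrite -!card_count_enum -(card_preim_bij _ g_bij).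
have cnE y w : common_nbrs (enum T2) E2 (g y) (g w) = common_nbrs (enum T1) E1 y w.
  by rewrite /common_nbrs count_g; apply: eq_count => v /=; rewrite !gE.
have d2E y w : at_distance2 (enum T2) E2 (g y) (g w) = at_distance2 (enum T1) E1 y w.
  by rewrite /at_distance2 (inj_eq g_inj) gE cnE.
move=> y w; have d2nE : distance2_nbrs (enum T2) E2 (g y) (g w) = distance2_nbrs (enum T1) E1 y w.
  by rewrite /distance2_nbrs count_g; apply: eq_count => v /=; rewrite gE d2E.
by rewrite /graph_class /graph_class_in (inj_eq g_inj) gE cnE d2nE.
Qed.

Section SchemeCounting.
Variables (T : finType) (n : nat) (c : T -> T -> 'I_n).
Hypothesis c_scheme : is_scheme c.

Lemma scheme_count (D : T -> T -> bool) (j : 'I_n) u v u' v' :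
  (forall x y x' y', c x y = c x' y' -> D x y = D x' y') -> c u v = c u' v' ->
  #|[pred w | D u w && (c w v == j)]| = #|[pred w | D u' w && (c w v' == j)]|.
Proof.
move=> D_inv e.
(* [D] is a union of relations of the scheme. *)
pose Q i := [exists p : T * T, (c p.1 p.2 == i) && D p.1 p.2].
have DQ x y : D x y = Q (c x y).
  apply/idP/existsP => [Dxy | [[x' y'] /andP[/eqP /= e' Dp]]]; first by exists (x, y); rewrite eqxx.
  by rewrite (D_inv x y x' y').
have sum_classes x y : #|[pred w | D x w && (c w y == j)]| =
    \sum_(i | Q i) #|[set w | (c x w == i) && (c w y == j)]|.
  rewrite -sum1_card (partition_big (c x) Q) /=; last by move=> w /andP[]; rewrite DQ.
  apply: eq_bigr => i Qi; rewrite -sum1_card; apply: eq_bigl => w; rewrite !inE DQ.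
  by case: (c x w =P i) => [->|_]; rewrite ?Qi ?eqxx ?andbT ?andbF.
have [_ _ _ p_ex] := c_scheme.
rewrite !sum_classes; apply: eq_bigr => i _; have [p p_cl] := p_ex (c u v) i j.
by rewrite !p_cl -?e.
Qed.

Lemma pnumE u v (i j : 'I_n) :
  pnum c (c u v) i j = #|[set z | (c u z == i) && (c z v == j)]|.
Proof.
have [_ _ _ p_ex] := c_scheme; have [p p_cl] := p_ex (c u v) i j.
rewrite /pnum; case: pickP => [[u' v'] /= e | no_pair]; last first.
  by have := no_pair (u, v); rewrite /= eqxx.
rewrite (p_cl u v) // -(p_cl u' v'); last exact/val_inj/eqP.
by apply: eq_card => z; rewrite !inE !val_eqE.
Qed.

Lemma graph_class_scheme (E : rel T) (i1 : 'I_n) : (forall x y, E x y = (c x y == i1)) ->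
  forall u v u' v', c u v = c u' v' -> graph_class E u v = graph_class E u' v'.
Proof.
move=> Ec; have [c0 c_sym _ _] := c_scheme.
have diag_inv x y x' y' : c x y = c x' y' -> (x == y) = (x' == y') by move=> e; rewrite -!c0 e.
have E_inv x y x' y' : c x y = c x' y' -> E x y = E x' y' by move=> e; rewrite !Ec e.
have cn_inv x y x' y' : c x y = c x' y' ->
    common_nbrs (enum T) E x y = common_nbrs (enum T) E x' y'.
  move=> e; have cn_card a b : common_nbrs (enum T) E a b =
      #|[pred w | (c a w == i1) && (c w b == i1)]|.
    by rewrite card_count_enum; apply: eq_count => w; rewrite /= !Ec.
  by rewrite !cn_card; apply: (scheme_count (D := fun a w => c a w == i1)) e => ? ? ? ? ->.
have d2_inv x y x' y' : c x y = c x' y' ->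
    at_distance2 (enum T) E x y = at_distance2 (enum T) E x' y'.
  by move=> e; rewrite /at_distance2 (diag_inv _ _ _ _ e) (E_inv _ _ _ _ e) (cn_inv _ _ _ _ e).
move=> u v u' v' e; have d2n_card a b : distance2_nbrs (enum T) E a b =
    #|[pred w | at_distance2 (enum T) E a w && (c w b == i1)]|.
  by rewrite card_count_enum; apply: eq_count => w; rewrite /= Ec c_sym andbC.
rewrite /graph_class /graph_class_in !d2n_card (scheme_count _ d2_inv e).
by rewrite (diag_inv _ _ _ _ e) (E_inv _ _ _ _ e) (cn_inv _ _ _ _ e).
Qed.

End SchemeCounting.

Notation MK := (bool * 'I_8)%type.
Definition mk_adj : rel MK := gp_adj 8 3.
Definition mk_vertices : seq MK := [seq (b, i) | b <- [:: false; true], i <- ords 7].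

Lemma mem_mk_vertices (u : MK) : u \in mk_vertices.
Proof. by case: u => b i; apply/allpairsP; exists (b, i); rewrite mem_ords; case: b. Qed.

Lemma uniq_mk_vertices : uniq mk_vertices. Proof. by vm_compute. Qed.

Lemma mk_forallP (P : pred MK) : reflect (forall u, P u) (all P mk_vertices).
Proof. by apply: (iffP allP) => [Pall u | Pall u _]; apply: Pall; rewrite ?mem_mk_vertices. Qed.

Lemma card_mk (P : pred MK) : #|P| = count P mk_vertices.
Proof. exact: card_count uniq_mk_vertices mem_mk_vertices. Qed.

(* Rotating both rims of GP(8,3) is an automorphism, so the relation containing
   (u, v) only depends on the rims of u, v and on v.2 - u.2 mod 8. *)
Definition mk_class (u v : MK) : 'I_6 :=
  nth ord0 (ords 5) (nth 0
    (match u.1, v.1 with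
     | false, false => [:: 0; 1; 2; 4; 5; 4; 2; 1]
     | true, true => [:: 0; 4; 2; 1; 5; 1; 2; 4]
     | _, _ => [:: 1; 2; 3; 2; 4; 2; 3; 2] end) ((8 + v.2 - u.2) %% 8)).

Definition mk_base : MK := (false, ord0).
Definition mk_nbr : MK := (false, Ordinal (isT : 1 < 8)).
Definition mk_rep (h : 'I_6) : MK := nth mk_base
  [seq (b, nth ord0 (ords 7) i) | '(b, i) <- [:: (false, 0); (false, 1); (false, 2);
     (true, 2); (false, 3); (false, 4)]] h.

Definition mk_pnum (h i j : 'I_6) : nat :=
  count (fun z => (mk_class mk_base z == i) && (mk_class z (mk_rep h) == j)) mk_vertices.

Definition mk_valency (j : nat) : nat := nth 0 [:: 1; 3; 6; 2; 3; 1] j.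
Definition mk_p1 (h j : nat) : nat := nth 0 (nth [::] [::
  [:: 0; 3; 0; 0; 0; 0]; [:: 1; 0; 2; 0; 0; 0]; [:: 0; 1; 0; 1; 1; 0];
  [:: 0; 0; 3; 0; 0; 0]; [:: 0; 0; 2; 0; 0; 1]; [:: 0; 0; 0; 0; 3; 0]] h) j.

Definition has_mk_diagram (T : finType) (K : T -> T -> 'I_6) : Prop :=
  [/\ forall u v, (val (K u v) == 0) = (u == v),
      forall u v, K u v = K v u,
      forall u v (j : 'I_6), #|[set z | (val (K u z) == 1) && (K z v == j)]| = mk_p1 (val (K u v)) j
    & forall u (j : 'I_6), #|[set z | K u z == j]| = mk_valency j].

Lemma mk_class0 u v : (val (mk_class u v) == 0) = (u == v).
Proof. by apply/(@eqP bool); move: v; apply/mk_forallP; move: u; apply/mk_forallP; vm_compute. Qed.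

Lemma mk_class_sym u v : mk_class u v = mk_class v u.
Proof. by apply/eqP; move: v; apply/mk_forallP; move: u; apply/mk_forallP; vm_compute. Qed.

Lemma mk_class_adj u v : (val (mk_class u v) == 1) = mk_adj u v.
Proof. by apply/(@eqP bool); move: v; apply/mk_forallP; move: u; apply/mk_forallP; vm_compute. Qed.

Lemma mk_class_graph u v : val (mk_class u v) = graph_class mk_adj u v.
Proof.
have perm_mk : perm_eq mk_vertices (enum {: MK}).
  apply: uniq_perm; rewrite ?enum_uniq ?uniq_mk_vertices // => w.
  by rewrite mem_enum mem_mk_vertices.
rewrite /graph_class -(graph_class_perm _ perm_mk); apply/eqP.
by move: v; apply/mk_forallP; move: u; apply/mk_forallP; vm_compute.
Qed.

Lemma mk_class_rep h : mk_class mk_base (mk_rep h) = h.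
Proof. by apply/eqP; move: h; apply/ords_forallP; vm_compute. Qed.

Lemma mk_class_pnum u v i j : #|[set z | (mk_class u z == i) && (mk_class z v == j)]|
  = mk_pnum (mk_class u v) i j.
Proof.
rewrite cardsE card_mk; apply/eqP; move: j; apply/ords_forallP; move: i; apply/ords_forallP.
by move: v; apply/mk_forallP; move: u; apply/mk_forallP; vm_compute.
Qed.

Lemma mk_class_p1 u v j : #|[set z | (val (mk_class u z) == 1) && (mk_class z v == j)]|
  = mk_p1 (val (mk_class u v)) j.
Proof.
rewrite cardsE card_mk; apply/eqP; move: j; apply/ords_forallP.
by move: v; apply/mk_forallP; move: u; apply/mk_forallP; vm_compute.
Qed.

Lemma mk_class_valency u j : #|[set z | mk_class u z == j]| = mk_valency j.
Proof.
rewrite cardsE card_mk; apply/eqP; move: j; apply/ords_forallP.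
by move: u; apply/mk_forallP; vm_compute.
Qed.

Lemma mk_class_scheme : is_scheme mk_class.
Proof.
split; [exact: mk_class0 | exact: mk_class_sym | | ].
  by move=> h; exists mk_base, (mk_rep h); rewrite mk_class_rep.
by move=> h i j; exists (mk_pnum h i j) => u v <-; apply: mk_class_pnum.
Qed.

Lemma card_mk_adj y : #|[set v | mk_adj y v]| = 3.
Proof.
transitivity #|[set v | mk_class y v == Ordinal (isT : 1 < 6)]|; last exact: mk_class_valency.
by apply: eq_card => v; rewrite !inE -mk_class_adj -val_eqE.
Qed.

Lemma generated_mk_relabel n (c : MK -> MK -> 'I_n) : generated_by mk_adj c ->
  exists2 phi : 'I_n -> 'I_6, bijective phi & forall u v, mk_class u v = phi (c u v).
Proof.
move=> [c_scheme c1 c_min]; pose i1 := c mk_base mk_nbr.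
have Ec x y : mk_adj x y = (c x y == i1) by rewrite -c1; apply: eq_val_ord; apply/eqP; rewrite c1.
have mk_inv u v u' v' : c u v = c u' v' -> mk_class u v = mk_class u' v'.
  by move=> e; apply: val_inj; rewrite /= !mk_class_graph (graph_class_scheme c_scheme Ec e).
pose phi i := if [pick p | c p.1 p.2 == i] is Some p then mk_class p.1 p.2 else ord0.
have mk_phi u v : mk_class u v = phi (c u v).
  rewrite /phi; case: pickP => [[u' v'] /= /eqP/mk_inv // | no_pair].
  by have := no_pair (u, v); rewrite /= eqxx.
exists phi => //; apply: surj_card_bij => [h|].
  by exists (c mk_base (mk_rep h)); rewrite -mk_phi mk_class_rep.
rewrite !card_ord; apply: (c_min 6 mk_class mk_class_scheme).
by exists (Ordinal (isT : 1 < 6)) => x y; rewrite -mk_class_adj; apply/esym/eq_val_ord.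
Qed.

Section SameDiagram.
Variables (n : nat) (c : MK -> MK -> 'I_n) (phi : 'I_n -> 'I_6) (phi' : 'I_6 -> 'I_n).
Hypotheses (c_scheme : is_scheme c) (c1 : forall u v, (val (c u v) == 1) = mk_adj u v).
Hypotheses (phiK : cancel phi phi') (phi'K : cancel phi' phi).
Hypothesis mk_c : forall u v, mk_class u v = phi (c u v).
Variables (T : finType) (c' : T -> T -> 'I_n) (sigma sigma' : 'I_n -> 'I_n).
Hypotheses (c'_scheme : is_scheme c') (sigmaK : cancel sigma sigma')
           (sigma'K : cancel sigma' sigma).
Hypotheses (sigma0 : forall i, val i = 0 -> val (sigma i) = 0)
           (sigma1 : forall i, val i = 1 -> val (sigma i) = 1).
Hypothesis sigma_valency : forall i, valency c (val i) = valency c' (val (sigma i)).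
Hypothesis sigma_p1 :
  forall i j, pnum c (val i) 1 (val j) = pnum c' (val (sigma i)) 1 (val (sigma j)).

Definition mk_relabel u v := phi (sigma' (c' u v)).

Let c_onto i : exists u v, c u v = i. Proof. by case: c_scheme => _ _ onto _; apply: onto. Qed.

Let val_sigma' i t : t <= 1 -> (val (sigma' i) == t) = (val i == t).
Proof. by case: t => [|[|]] // _; apply: inv_fixes_val. Qed.

Let val_phi i t : t <= 1 -> (val (phi i) == t) = (val i == t).
Proof.
have [u [v <-]] := c_onto i; rewrite -mk_c.
case: t => [|[|]] // _; first by rewrite mk_class0; case: c_scheme => ->.
by rewrite mk_class_adj c1.
Qed.

Lemma val_mk_relabel u v t : t <= 1 -> (val (mk_relabel u v) == t) = (val (c' u v) == t).
Proof. by move=> le1; rewrite val_phi ?val_sigma'. Qed.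

Let eq_mk_relabel u v j : (mk_relabel u v == j) = (c' u v == sigma (phi' j)).
Proof. by rewrite (can2_eq phiK phi'K) (can2_eq sigma'K sigmaK). Qed.

Let eq_mk_class u v j : (mk_class u v == j) = (c u v == phi' j).
Proof. by rewrite mk_c (can2_eq phiK phi'K). Qed.

Lemma mk_relabel_p1 u v (j : 'I_6) :
  #|[set z | (val (mk_relabel u z) == 1) && (mk_relabel z v == j)]|
  = mk_p1 (val (mk_relabel u v)) j.
Proof.
pose i1 := c mk_base mk_nbr; have vi1 : val i1 = 1 by apply/eqP; rewrite c1.
have [u0 [v0 e0]] := c_onto (sigma' (c' u v)).
transitivity (pnum c' (c' u v) (sigma i1) (sigma (phi' j))).
  rewrite pnumE //; apply: eq_card => z; rewrite !inE val_mk_relabel // eq_mk_relabel.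
  by rewrite (eq_val_ord _ (sigma1 vi1)).
rewrite -{1}[c' u v]sigma'K (sigma1 vi1) -sigma_p1 -e0 -[X in pnum _ _ X _]vi1 pnumE //.
rewrite /mk_relabel -e0 -mk_c -mk_class_p1; apply: eq_card => z.
by rewrite !inE eq_mk_class mk_class_adj -c1 (eq_val_ord _ vi1).
Qed.

Lemma mk_relabel_valency u (j : 'I_6) : #|[set z | mk_relabel u z == j]| = mk_valency j.
Proof.
have vuu : val (c' u u) = 0 by apply/eqP; case: c'_scheme => ->.
have vbb : val (c mk_base mk_base) = 0 by apply/eqP; case: c_scheme => ->.
transitivity (pnum c' (c' u u) (sigma (phi' j)) (sigma (phi' j))).
  rewrite pnumE //; apply: eq_card => z; rewrite !inE eq_mk_relabel.
  by case: c'_scheme => _ -> _ _; rewrite andbb.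
rewrite vuu -/(valency c' _) -sigma_valency /valency -[X in pnum _ X _ _]vbb pnumE //.
rewrite -(mk_class_valency mk_base); apply: eq_card => z; rewrite !inE !eq_mk_class.
by case: c_scheme => _ -> _ _; rewrite andbb.
Qed.

Lemma mk_relabel_diagram : has_mk_diagram mk_relabel.
Proof.
split; [| | exact: mk_relabel_p1 | exact: mk_relabel_valency] => u v.
  by rewrite val_mk_relabel //; case: c'_scheme.
by rewrite /mk_relabel; case: c'_scheme => _ ->.
Qed.

End SameDiagram.

Ltac exists_mk_vertex := first
  [ by exists (false, Ordinal (isT : 0 < 8))
  | by exists (false, Ordinal (isT : 1 < 8))
  | by exists (false, Ordinal (isT : 2 < 8))
  | by exists (false, Ordinal (isT : 3 < 8))
  | by exists (false, Ordinal (isT : 4 < 8))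
  | by exists (false, Ordinal (isT : 5 < 8))
  | by exists (false, Ordinal (isT : 6 < 8))
  | by exists (false, Ordinal (isT : 7 < 8))
  | by exists (true, Ordinal (isT : 0 < 8))
  | by exists (true, Ordinal (isT : 1 < 8))
  | by exists (true, Ordinal (isT : 2 < 8))
  | by exists (true, Ordinal (isT : 3 < 8))
  | by exists (true, Ordinal (isT : 4 < 8))
  | by exists (true, Ordinal (isT : 5 < 8))
  | by exists (true, Ordinal (isT : 6 < 8))
  | by exists (true, Ordinal (isT : 7 < 8)) ].

Section MKDiagram.
Variables (T : finType) (K : T -> T -> 'I_6).
Hypothesis K_mk : has_mk_diagram K.

Definition adj1 : rel T := fun u v => val (K u v) == 1.

Local Notation cl b u := (val (K b u)).

Lemma cl_sym u v : cl u v = cl v u.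
Proof. by case: K_mk => _ -> _ _. Qed.

Lemma adj1_sym u v : adj1 u v = adj1 v u.
Proof. by rewrite /adj1 cl_sym. Qed.

Lemma cl_eq0 u v : (cl u v == 0) = (u == v).
Proof. by case: K_mk. Qed.

Lemma card_class b j : j < 6 -> #|[set w | cl b w == j]| = mk_valency j.
Proof.
move=> lt_j6; pose J := Ordinal lt_j6; have -> : j = J by [].
by case: K_mk => _ _ _ /(_ b J) <-; apply: eq_card => w; rewrite !inE val_eqE.
Qed.

Lemma card_nbrs_class b v j : j < 6 ->
  #|[set w | adj1 v w && (cl b w == j)]| = mk_p1 (cl b v) j.
Proof.
move=> lt_j6; pose J := Ordinal lt_j6; have -> : j = J by [].
case: K_mk => _ _ p1 _; rewrite cl_sym -p1.
by apply: eq_card => w; rewrite !inE cl_sym val_eqE.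
Qed.

Lemma card_adj1 v : #|[set w | adj1 v w]| = 3.
Proof. exact: card_class. Qed.

Lemma nbrs_class_all b v j w : j < 6 -> mk_p1 (cl b v) j = 3 -> adj1 v w -> cl b w = j.
Proof.
move=> lt_j6 all_j vw.
have sub : [set w | adj1 v w && (cl b w == j)] \subset [set w | adj1 v w].
  by apply/subsetP => y; rewrite !inE => /andP[].
have /eqP/setP/(_ w) : [set w | adj1 v w && (cl b w == j)] == [set w | adj1 v w].
  by rewrite eqEcard sub card_nbrs_class // all_j card_adj1.
by rewrite !inE vw => /eqP.
Qed.

Lemma nbrs_class_uniq b v j w w' : j < 6 -> mk_p1 (cl b v) j <= 1 ->
  adj1 v w -> adj1 v w' -> cl b w = j -> cl b w' = j -> w = w'.
Proof.
move=> lt_j6 le1 vw vw' bw bw'; rewrite -(card_nbrs_class b v lt_j6) in le1.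
by apply: (card_le1_eqP le1); rewrite inE ?vw ?vw' ?bw ?bw' eqxx.
Qed.

Lemma nbrs_class_exists b v j : j < 6 -> 0 < mk_p1 (cl b v) j ->
  exists2 w, adj1 v w & cl b w = j.
Proof.
move=> lt_j6; rewrite -(card_nbrs_class b v lt_j6) => /card_gt0P[w].
by rewrite inE => /andP[vw /eqP bw]; exists w.
Qed.

Lemma common_nbr_uniq u v w w' :
  u != v -> adj1 u w -> adj1 w v -> adj1 u w' -> adj1 w' v -> w = w'.
Proof.
rewrite -cl_eq0 cl_sym => vu uw wv uw' w'v.
apply: (nbrs_class_uniq (b := v) (v := u) (j := 1)) => //; last by apply/eqP; rewrite cl_sym.
  by move: vu; case: (K v u) => [[|[|[|[|[|[|]]]]]] ?].
by apply/eqP; rewrite cl_sym.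
Qed.

Lemma card_mk_diagram (x : T) : #|T| = 16.
Proof.
rewrite -sum1_card (partition_big (K x) predT) //=.
rewrite (eq_bigr (fun j : 'I_6 => mk_valency j)); first by rewrite !big_ord_recr big_ord0.
move=> j _; rewrite -(card_class x (ltn_ord j)) -sum1_card.
by apply: eq_bigl => w; rewrite inE val_eqE.
Qed.

Lemma graph_class_mk_diagram u v : val (K u v) = graph_class adj1 u v.
Proof.
have cnE u' v' : common_nbrs (enum T) adj1 u' v' = mk_p1 (cl u' v') 1.
  rewrite /common_nbrs cl_sym -card_nbrs_class // -card_count_enum cardsE.
  by apply: eq_card => w; rewrite -topredE /= [adj1 w v']adj1_sym.
have d2E w : at_distance2 (enum T) adj1 u w = (cl u w == 2).
  rewrite /at_distance2 cnE -cl_eq0 /adj1.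
  by case: (K u w) => [[|[|[|[|[|[|]]]]]] ?].
have d2nE : distance2_nbrs (enum T) adj1 u v = mk_p1 (cl u v) 2.
  rewrite /distance2_nbrs -card_nbrs_class // -card_count_enum cardsE.
  by apply: eq_card => w; rewrite -topredE /= d2E.
rewrite /graph_class /graph_class_in -cl_eq0 cnE d2nE /adj1.
by case: (K u v) => [[|[|[|[|[|[|]]]]]] ?].
Qed.

Section Layers.
Variable x : T.
Local Notation lvl u := (cl x u).

Definition common_nbr (P Q : T) : T := odflt P [pick m | adj1 P m && adj1 m Q].

Lemma common_nbr_spec P Q : lvl P = 1 -> lvl Q = 3 ->
  [/\ adj1 P (common_nbr P Q), adj1 (common_nbr P Q) Q & lvl (common_nbr P Q) = 2].
Proof.
move=> lP lQ; have xP : adj1 x P by apply/eqP.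
have QP : cl Q P = 2 by apply: (nbrs_class_all (v := x)); rewrite // cl_sym lQ.
have [m Pm Qm] : exists2 m, adj1 P m & cl Q m = 1 by apply: nbrs_class_exists; rewrite ?QP.
rewrite /common_nbr; case: pickP => [m' /andP[Pm' m'Q] | /(_ m)]; last first.
  by rewrite Pm /adj1 cl_sym Qm.
by split=> //; apply: (nbrs_class_all (v := Q)); rewrite ?lQ // adj1_sym.
Qed.

Lemma common_nbr_inj P Q P' Q' : lvl P = 1 -> lvl Q = 3 -> lvl P' = 1 -> lvl Q' = 3 ->
  common_nbr P Q = common_nbr P' Q' -> P = P' /\ Q = Q'.
Proof.
move=> lP lQ lP' lQ' e; have [Pm mQ lm] := common_nbr_spec lP lQ.
have [] := common_nbr_spec lP' lQ'; rewrite -e => P'm mQ' _.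
split; [apply: (nbrs_class_uniq (b := x) (v := common_nbr P Q) (j := 1))
       | apply: (nbrs_class_uniq (b := x) (v := common_nbr P Q) (j := 3))];
  by rewrite ?lm // adj1_sym.
Qed.

Lemma class2_common_nbr m : lvl m = 2 ->
  exists P Q, [/\ lvl P = 1, lvl Q = 3 & m = common_nbr P Q].
Proof.
move=> lm; have [P mP lP] : exists2 P, adj1 m P & lvl P = 1.
  by apply: nbrs_class_exists; rewrite ?lm.
have [Q mQ lQ] : exists2 Q, adj1 m Q & lvl Q = 3 by apply: nbrs_class_exists; rewrite ?lm.
exists P, Q; split=> //; have [Pc cQ _] := common_nbr_spec lP lQ.
apply: (common_nbr_uniq (u := P) (v := Q)) => //; last by rewrite adj1_sym.
by apply/eqP => PQ; move: lQ; rewrite -PQ lP.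
Qed.

Lemma class4_nbr_exists m : lvl m = 2 -> exists2 u, adj1 m u & lvl u = 4.
Proof. by move=> lm; apply: nbrs_class_exists; rewrite ?lm. Qed.

Lemma class4_nbr_uniq m u u' :
  lvl m = 2 -> adj1 m u -> adj1 m u' -> lvl u = 4 -> lvl u' = 4 -> u = u'.
Proof. by move=> lm; apply: (nbrs_class_uniq (b := x)); rewrite ?lm. Qed.

Lemma class5_uniq w z : lvl w = 5 -> lvl z = 5 -> w = z.
Proof.
have class5 : #|[set w | lvl w == 5]| <= 1 by rewrite card_class.
by move=> lw lz; apply: (card_le1_eqP class5); rewrite inE ?lw ?lz.
Qed.

Lemma class4_adj_class5 u z : lvl u = 4 -> lvl z = 5 -> adj1 u z.
Proof.
move=> lu lz; have [w uw lw] : exists2 w, adj1 u w & lvl w = 5.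
  by apply: nbrs_class_exists; rewrite ?lu.
by rewrite (class5_uniq lz lw).
Qed.

Lemma class4_nbrs_parent P Q Q' u : lvl P = 1 -> lvl Q = 3 -> lvl Q' = 3 -> lvl u = 4 ->
  adj1 (common_nbr P Q) u -> adj1 (common_nbr P Q') u -> Q = Q'.
Proof.
move=> lP lQ lQ' lu mu m'u; have [Pm _ _] := common_nbr_spec lP lQ.
have [Pm' _ _] := common_nbr_spec lP lQ'.
have Pu : P != u by apply/eqP => Pu; move: lu; rewrite -Pu lP.
by case: (common_nbr_inj lP lQ lP lQ' (common_nbr_uniq Pu Pm mu Pm' m'u)).
Qed.

Lemma class4_nbrs_top P P' Q u : lvl P = 1 -> lvl P' = 1 -> lvl Q = 3 -> lvl u = 4 ->
  adj1 (common_nbr P Q) u -> adj1 (common_nbr P' Q) u -> P = P'.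
Proof.
move=> lP lP' lQ lu mu m'u; have [_ mQ _] := common_nbr_spec lP lQ.
have [_ m'Q _] := common_nbr_spec lP' lQ.
have Qu : Q != u by apply/eqP => Qu; move: lu; rewrite -Qu lQ.
rewrite adj1_sym in mQ; rewrite adj1_sym in m'Q.
by case: (common_nbr_inj lP lQ lP' lQ (common_nbr_uniq Qu mQ mu m'Q m'u)).
Qed.

Lemma class4_partner P Q Q' u : lvl P = 1 -> [set w | lvl w == 3] = [set Q; Q'] -> Q != Q' ->
  lvl u = 4 -> adj1 (common_nbr P Q) u ->
  exists2 P', lvl P' = 1 /\ P' != P & adj1 (common_nbr P' Q') u.
Proof.
move=> lP class3 QQ' lu mu.
have lQ3 w : (lvl w == 3) = (w \in [set Q; Q']) by rewrite -class3 inE.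
have /eqP lQ : lvl Q == 3 by rewrite lQ3 !inE eqxx.
have /eqP lQ' : lvl Q' == 3 by rewrite lQ3 !inE eqxx orbT.
have [w uw w_ne] :
    exists2 w, w \in [set w | adj1 u w && (lvl w == 2)] & w != common_nbr P Q.
  have /cards2P[w1 [w2 [w12 ->]]] : #|[set w | adj1 u w && (lvl w == 2)]| == 2.
    by rewrite card_nbrs_class ?lu.
  case: (w1 =P common_nbr P Q) => [<- | ne].
    by exists w2; rewrite ?inE ?eqxx ?orbT // eq_sym.
  by exists w1; rewrite ?inE ?eqxx //; apply/eqP.
move: uw; rewrite inE => /andP[uw /eqP lw].
have [P' [Q'' [lP' lQ'' w_eq]]] := class2_common_nbr lw; rewrite adj1_sym w_eq in uw.
have Q''_ne : Q'' != Q.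
  apply: contra_neq w_ne => eQ; rewrite w_eq eQ in uw *.
  by rewrite (class4_nbrs_top lP' lP lQ lu uw mu).
have eQ'' : Q'' = Q'.
  by move/eqP: lQ''; rewrite lQ3 !inE (negPf Q''_ne) => /eqP.
exists P'; last by rewrite -eQ''.
split=> //; apply: contra_neq QQ' => eP; rewrite eP in uw.
by rewrite (class4_nbrs_parent lP lQ lQ' lu mu) // -eQ''.
Qed.

Section Frame.
Variables (a b d s t : T).
Hypotheses (class1 : [set w | lvl w == 1] = [set a; b; d])
           (class3 : [set w | lvl w == 3] = [set s; t]).

Let lvl1 w : (lvl w == 1) = (w \in [set a; b; d]). Proof. by rewrite -class1 inE. Qed.
Let lvl3 w : (lvl w == 3) = (w \in [set s; t]). Proof. by rewrite -class3 inE. Qed.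
Let la : lvl a = 1. Proof. by apply/eqP; rewrite lvl1 !inE eqxx. Qed.
Let lb : lvl b = 1. Proof. by apply/eqP; rewrite lvl1 !inE eqxx orbT. Qed.
Let ld : lvl d = 1. Proof. by apply/eqP; rewrite lvl1 !inE eqxx !orbT. Qed.
Let ls : lvl s = 3. Proof. by apply/eqP; rewrite lvl3 !inE eqxx. Qed.
Let lt : lvl t = 3. Proof. by apply/eqP; rewrite lvl3 !inE eqxx orbT. Qed.
Let lvl_common_nbr P Q : lvl P = 1 -> lvl Q = 3 -> lvl (common_nbr P Q) = 2.
Proof. by move=> lP lQ; case: (common_nbr_spec lP lQ). Qed.

(* The class-4 neighbours of the six vertices [common_nbr P Q] pair them up
   along a 3-cycle of the parents. *)
Lemma class4_cycle u1 : a != b -> b != d -> s != t -> lvl u1 = 4 ->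
  adj1 (common_nbr a s) u1 -> adj1 (common_nbr d t) u1 ->
  exists u2 u3, [/\ lvl u2 = 4, lvl u3 = 4,
    adj1 (common_nbr d s) u2 /\ adj1 (common_nbr b t) u2
  & adj1 (common_nbr b s) u3 /\ adj1 (common_nbr a t) u3].
Proof.
move=> ab bd st lu1 u1_as u1_dt.
have [u2 ds_u2 lu2] := class4_nbr_exists (lvl_common_nbr ld ls).
have [P2 [lP2 P2d] u2_P2t] := class4_partner ld class3 st lu2 ds_u2.
have [u3 bs_u3 lu3] := class4_nbr_exists (lvl_common_nbr lb ls).
have [P3 [lP3 P3b] u3_P3t] := class4_partner lb class3 st lu3 bs_u3.
have P3a : P3 = a.
  move/eqP: (lP3); rewrite lvl1 !inE (negPf P3b) orbF => /orP[/eqP // | /eqP P3d].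
  rewrite P3d in u3_P3t.
  rewrite -(class4_nbr_uniq (lvl_common_nbr ld lt) u1_dt u3_P3t) in bs_u3 => //.
  by move/eqP: ab; rewrite (class4_nbrs_top la lb ls lu1 u1_as bs_u3).
have P2b : P2 = b.
  move/eqP: (lP2); rewrite lvl1 !inE (negPf P2d) orbF => /orP[/eqP P2a | /eqP //].
  rewrite P2a in u2_P2t; rewrite P3a in u3_P3t.
  rewrite (class4_nbr_uniq (lvl_common_nbr la lt) u2_P2t u3_P3t) in ds_u2 => //.
  by move/eqP: bd; rewrite (class4_nbrs_top lb ld ls lu3 bs_u3 ds_u2).
by rewrite P2b in u2_P2t; rewrite P3a in u3_P3t; exists u2, u3.
Qed.

Section Labelling.
Variables (z u1 u2 u3 : T).
Hypotheses (lz : lvl z = 5) (lu1 : lvl u1 = 4) (lu2 : lvl u2 = 4) (lu3 : lvl u3 = 4).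
Hypotheses (u1_as : adj1 (common_nbr a s) u1) (u1_dt : adj1 (common_nbr d t) u1)
           (u2_ds : adj1 (common_nbr d s) u2) (u2_bt : adj1 (common_nbr b t) u2)
           (u3_bs : adj1 (common_nbr b s) u3) (u3_at : adj1 (common_nbr a t) u3).

Definition mk_label (y : MK) : T :=
  match y.1, val y.2 with
  | false, 0 => x | false, 1 => a | false, 2 => common_nbr a s | false, 3 => u1
  | false, 4 => z | false, 5 => u2 | false, 6 => common_nbr b t | false, _ => b
  | true, 0 => d | true, 1 => common_nbr a t | true, 2 => s | true, 3 => common_nbr d t
  | true, 4 => u3 | true, 5 => common_nbr d s | true, 6 => t | true, _ => common_nbr b s
  end.

Lemma mk_label_hom y w : mk_adj y w -> adj1 (mk_label y) (mk_label w).
Proof.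
have edge_x P : lvl P = 1 -> adj1 x P by move=> /eqP.
have edge_parent P Q : lvl P = 1 -> lvl Q = 3 -> adj1 P (common_nbr P Q).
  by move=> lP lQ; case: (common_nbr_spec lP lQ).
have edge_top P Q : lvl P = 1 -> lvl Q = 3 -> adj1 (common_nbr P Q) Q.
  by move=> lP lQ; case: (common_nbr_spec lP lQ).
have edge_z u : lvl u = 4 -> adj1 u z by move=> lu; apply: class4_adj_class5.
(* Section [Let]s are not hypotheses: bring them into the context for [done]. *)
have := la; have := lb; have := ld; have := ls; have := lt => lt' ls' ld' lb' la'.
case: y => [[] [[|[|[|[|[|[|[|[|?]]]]]]]] ?]] //;
case: w => [[] [[|[|[|[|[|[|[|[|?]]]]]]]] ?]] //= _;
  first [ done | by apply: edge_x | by apply: edge_parent | by apply: edge_top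
        | by apply: edge_z | rewrite adj1_sym; first [ done | by apply: edge_x
        | by apply: edge_parent | by apply: edge_top | by apply: edge_z ] ].
Qed.

Lemma mk_label_onto w : exists y, mk_label y = w.
Proof.
have in_class1 P : lvl P = 1 -> [\/ P = a, P = b | P = d].
  move/eqP; rewrite lvl1 !inE -orbA => /or3P[] /eqP ->;
  by [constructor 1 | constructor 2 | constructor 3].
have in_class3 Q : lvl Q = 3 -> Q = s \/ Q = t.
  by move/eqP; rewrite lvl3 !inE => /orP[] /eqP; [left | right].
case lw : (lvl w) (ltn_ord (K x w)) => [|[|[|[|[|[|//]]]]]] _.
- by move/eqP: lw; rewrite cl_eq0 => /eqP <-; exists_mk_vertex.
- by case: (in_class1 w lw) => ->; exists_mk_vertex.
- have [P [Q [lP lQ ->]]] := class2_common_nbr lw.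
  by case: (in_class1 P lP) => ->; case: (in_class3 Q lQ) => ->; exists_mk_vertex.
- by case: (in_class3 w lw) => ->; exists_mk_vertex.
- have [m mw lm] : exists2 m, adj1 w m & lvl m = 2 by apply: nbrs_class_exists; rewrite ?lw.
  have [P [Q [lP lQ em]]] := class2_common_nbr lm; rewrite adj1_sym {}em in mw.
  have below u : adj1 (common_nbr P Q) u -> lvl u = 4 -> w = u.
    by move=> mu lu; apply: (class4_nbr_uniq (lvl_common_nbr lP lQ) mw mu).
  case: (in_class1 P lP) (in_class3 Q lQ) => eP [] eQ; rewrite eP eQ in below.
  + by rewrite (below u1) //; exists_mk_vertex.
  + by rewrite (below u3) //; exists_mk_vertex.
  + by rewrite (below u3) //; exists_mk_vertex.
  + by rewrite (below u2) //; exists_mk_vertex.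
  + by rewrite (below u2) //; exists_mk_vertex.
  + by rewrite (below u1) //; exists_mk_vertex.
- by rewrite (class5_uniq lw lz); exists_mk_vertex.
Qed.

Lemma mk_label_bij : bijective mk_label.
Proof.
apply: surj_card_bij mk_label_onto _.
by rewrite (card_mk_diagram x) card_prod card_bool card_ord.
Qed.

Lemma mk_label_adj y w : adj1 (mk_label y) (mk_label w) = mk_adj y w.
Proof.
apply/idP/idP => [yw |]; last exact: mk_label_hom.
have label_inj := bij_inj mk_label_bij.
have /setP/(_ (mk_label w)) : mk_label @: [set v | mk_adj y v] = [set v | adj1 (mk_label y) v].
  apply/eqP; rewrite eqEcard card_imset // card_adj1 card_mk_adj leqnn andbT.
  by apply/subsetP => _ /imsetP[v yv ->]; rewrite inE mk_label_hom // -inE.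
by rewrite mem_imset // !inE yw.
Qed.

Lemma mk_label_class y w : K (mk_label y) (mk_label w) = mk_class y w.
Proof.
apply: val_inj; rewrite /= graph_class_mk_diagram mk_class_graph.
exact: graph_class_bij mk_label_bij mk_label_adj y w.
Qed.

End Labelling.

Lemma frame_iso z u1 : a != b -> b != d -> s != t -> lvl z = 5 -> lvl u1 = 4 ->
  adj1 (common_nbr a s) u1 -> adj1 (common_nbr d t) u1 ->
  exists2 g : MK -> T, bijective g & forall y w, K (g y) (g w) = mk_class y w.
Proof.
move=> ab bd st lz lu1 u1_as u1_dt.
have [u2 [u3 [lu2 lu3 [u2_ds u2_bt] [u3_bs u3_at]]]] :=
  class4_cycle ab bd st lu1 u1_as u1_dt.
exists (mk_label z u1 u2 u3); first exact: mk_label_bij.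
exact: mk_label_class.
Qed.

End Frame.

Lemma mk_diagram_iso :
  exists2 g : MK -> T, bijective g & forall y w, K (g y) (g w) = mk_class y w.
Proof.
have [a [b [d [[ab ad bd] class1]]]] : exists a b d,
    [/\ a != b, a != d & b != d] /\ [set w | lvl w == 1] = [set a; b; d].
  case: cards_eqP (card_class x (isT : 1 < 6)) => [[|a [|b [|d []]]]] //=.
  rewrite !inE !negb_or andbT => /andP[/andP[ab ad] bd] _.
  by exists a, b, d; split=> //; apply/setP => w; rewrite !inE orbA.
have /cards2P[s [t [st class3]]] : #|[set w | lvl w == 3]| == 2 by rewrite card_class.
have /card_gt0P[z] : 0 < #|[set w | lvl w == 5]| by rewrite card_class.
rewrite inE => /eqP lz.
have mem1 w : (lvl w == 1) = (w \in [set a; b; d]) by rewrite -class1 inE.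
have la : lvl a = 1 by apply/eqP; rewrite mem1 !inE eqxx.
have : s \in [set w | lvl w == 3] by rewrite class3 !inE eqxx.
rewrite inE => /eqP ls.
have [_ _ l_as] := common_nbr_spec la ls.
have [u1 as_u1 lu1] := class4_nbr_exists l_as.
have [P [lP Pa] u1_Pt] := class4_partner la class3 st lu1 as_u1.
move/eqP: lP; rewrite mem1 !inE (negPf Pa) /= => /orP[] /eqP eP; subst P.
  apply: (frame_iso (b := d) (d := b) _ class3 ad _ st lz lu1 as_u1 u1_Pt).
    by rewrite class1; apply/setP => w; rewrite !inE orbAC.
  by rewrite eq_sym.
exact: (frame_iso class1 class3 ab bd st lz lu1 as_u1 u1_Pt).
Qed.

End Layers.

End MKDiagram.

Theorem proposition3p2 (n : nat) (c : bool * 'I_8 -> bool * 'I_8 -> 'I_n) :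
  generated_by (gp_adj 8 3) c ->
  forall (T' : finType) (n' : nat) (c' : T' -> T' -> 'I_n'),
    is_scheme c' -> same_diagram c c' -> scheme_iso_dist c c'.
Proof.
move=> c_gen T' n' c' c'_scheme [en]; subst n'.
case=> sigma [[sigma' sigmaK sigma'K] sigma0 sigma1 val_sigma p1_sigma].
have [c_scheme c1 _] := c_gen.
have [phi [phi' phiK phi'K] mk_c] := generated_mk_relabel c_gen.
have K_mk := mk_relabel_diagram c_scheme c1 phiK phi'K mk_c c'_scheme sigmaK sigma'K
  sigma0 sigma1 val_sigma p1_sigma.
have [x _] : exists x : T', True by case: c'_scheme => _ _ /(_ (c mk_base mk_base))[x _].
have [g [h gK hK] g_class] := mk_diagram_iso K_mk x.
exists h, sigma'; split; [by exists g | by exists sigma | move=> u v |].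
  by apply: (can_inj phiK); rewrite -mk_c -g_class !hK.
exact: inv_fixes_val sigmaK sigma'K sigma1.
Qed.
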